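(* Assume $f$ is in Case 2. Let $l>0$ if $\delta\le d$, and $0<l<\alpha$ if $\delta>d$. Then there exist positive numbers $r_1,r_2$, which can be taken arbitrarily small, such that $f(U^l_{r_1,r_2})\subset U^l_{r_1,r_2}$, where $U^l_{r_1,r_2}=\{|z|<r_1,\ |w|<r_2|z|^l\}$.
   Context: Let $f(z,w)=(p(z),q(z,w))$ be a holomorphic skew product defined near the origin of $\mathbb{C}^2$ with $p(z)=az^{\delta}+O(z^{\delta+1})$, $a\neq0$, $\delta\ge2$, and $q(z,w)=\sum_{i,j\ge0}b_{ij}z^iw^j$ with $b_{00}=b_{01}=0$. The Newton polygon $N(q)$ is the convex hull of $\bigcup_{b_{ij}\ne0}\{(x,y):x\ge i,\ y\ge j\}$, with vertices $(n_1,m_1),\dots,(n_s,m_s)$, $n_1<\dots<n_s$, $m_1>\dots>m_s$, $s>1$. $T_{s-1}$ is the $y$-intercept of the line through $(n_{s-1},m_{s-1})$ and $(n_s,m_s)$. Case 2 means $\delta\le T_{s-1}$; then set $(\gamma,d)=(n_s,m_s)$ (so $\gamma>0$) and, when $\delta\neq d$, $\alpha=\gamma/(\delta-d)$. *)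

From HB Require Import structures.
From mathcomp Require Import all_boot all_order all_algebra.
From mathcomp Require Import all_classical all_reals all_analysis.
From mathcomp Require Import complex.
Set Implicit Arguments. Unset Strict Implicit. Unset Printing Implicit Defensive.
Import Order.TTheory GRing.Theory Num.Theory.
Import numFieldNormedType.Exports.
Local Open Scope classical_set_scope.
Local Open Scope ring_scope.

Definition cmod (R : realType) (z : R[i]) : R := Normc.normc z.

Definition psum1 (R : realType) (c : nat -> R[i]) (z : R[i]) (N : nat) : R[i] :=
  \sum_(k < N) c k * z ^+ k.

Definition psum2 (R : realType) (b : nat -> nat -> R[i]) (z w : R[i]) (N : nat)
  : R[i] := \sum_(i < N) \sum_(j < N) b i j * z ^+ i * w ^+ j.

Definition quadrants (R : realType) (b : nat -> nat -> R[i]) : set (R * R) :=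
  [set x | exists i j : nat, b i j != 0 /\ (i%:R <= x.1) /\ (j%:R <= x.2)].

Definition convex_hull2 (R : realType) (A : set (R * R)) : set (R * R) :=
  [set x | exists (n : nat) (t : 'I_n -> R) (P : 'I_n -> R * R),
     (forall k, 0 <= t k) /\ (\sum_(k < n) t k = 1) /\ (forall k, A (P k)) /\
     x = (\sum_(k < n) t k * (P k).1, \sum_(k < n) t k * (P k).2)].

Definition newton_polygon (R : realType) (b : nat -> nat -> R[i]) : set (R * R) :=
  convex_hull2 (quadrants b).

Definition np_vertex (R : realType) (b : nat -> nat -> R[i]) (v : R * R) : Prop :=
  newton_polygon b v /\
  forall x y t, newton_polygon b x -> newton_polygon b y -> 0 < t < 1 ->
    v = (t * x.1 + (1 - t) * y.1, t * x.2 + (1 - t) * y.2) -> x = v /\ y = v.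

Definition U_set (R : realType) (l r1 r2 : R) : set (R[i] * R[i]) :=
  [set zw | cmod zw.1 < r1 /\ cmod zw.2 < r2 * (cmod zw.1) `^ l].

Definition cconv (R : realType) (u : nat -> R[i]) (l : R[i]) : Prop :=
  (fun n => cmod (u n - l)) @ \oo --> (0 : R).

From HB Require Import structures.
From mathcomp Require Import all_boot all_order all_algebra.
From mathcomp Require Import all_classical all_reals all_analysis.
From mathcomp Require Import complex.
From mathcomp Require Import ring lra zify.
Import Order.TTheory GRing.Theory Num.Theory.
Import numFieldNormedType.Exports.
Local Open Scope classical_set_scope.
Local Open Scope ring_scope.
Set Implicit Arguments. Unset Strict Implicit.

(* Every monomial z^i w^j of q lies above the last edge of N(q), of y-intercept
   T >= delta, and above the line y = m_s. Hence monomials with i = 0 have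
   j >= delta, while for i >= 1 one gets i + l j >= l delta + kappa for some
   kappa > 0 (for delta > m_s this is where l < alpha is used). On U^l, where
   |w| <= r2 |z|^l, this gives |q(z,w)| <= C (r2^2 + |z|^(kappa/2)) |z|^(l delta),
   while |p(z)| is comparable to |a| |z|^delta, so r2 |p(z)|^l is of order
   r2 |z|^(l delta). Taking r2 small, and then r1 small, f maps U^l into itself. *)

Section ComplexModulus.
Variable R : realType.
Implicit Types x y : R[i].

Lemma cmod_ge0 x : (0 : R) <= cmod x.
Proof. by case: x => u v; rewrite /cmod /= sqrtr_ge0. Qed.

Lemma cmod0 : cmod (0 : R[i]) = 0.
Proof. exact: Normc.normc0. Qed.

Lemma cmodM x y : cmod (x * y) = cmod x * cmod y.
Proof. exact: Normc.normcM. Qed.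

Lemma cmodX x k : cmod (x ^+ k) = cmod x ^+ k.
Proof.
elim: k => [|k IHk]; first by rewrite !expr0 /cmod Normc.normc1.
by rewrite !exprS cmodM IHk.
Qed.

Lemma cmodD x y : cmod (x + y) <= cmod x + cmod y.
Proof. exact: le_normcD. Qed.

Lemma cmodN x : cmod (- x) = cmod x.
Proof. exact: normcN. Qed.

Lemma cmodB x y : cmod (x - y) <= cmod x + cmod y.
Proof. by rewrite -(cmodN y) cmodD. Qed.

Lemma cmod_gt0 x : x != 0 -> (0 : R) < cmod x.
Proof.
move=> x_neq0; rewrite lt_neqAle cmod_ge0 andbT eq_sym.
by apply: contra_neq x_neq0 => /Normc.eq0_normc.
Qed.

Lemma cmod_sum (I : finType) (P : pred I) (F : I -> R[i]) :
  cmod (\sum_(k | P k) F k) <= \sum_(k | P k) cmod (F k).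
Proof.
elim/big_ind2: _ => [|x1 x2 y1 y2 le1 le2|//]; first by rewrite cmod0.
exact: le_trans (cmodD _ _) (lerD le1 le2).
Qed.

Lemma cconv_cmod_le (u : nat -> R[i]) l x B N : cconv u l ->
  (forall n, (N <= n)%N -> cmod (u n - x) <= B) -> cmod (l - x) <= B.
Proof.
move=> ul uB; rewrite -subr_le0; apply: (cvgr_to_ge ul); near=> n.
have unB : cmod (u n - x) <= B by apply: uB; near: n; exists N.
have -> : l - x = (u n - x) - (u n - l) by ring.
by have := cmodB (u n - x) (u n - l); lra.
Unshelve. all: by end_near. Qed.
End ComplexModulus.

Section NearZero.
Variable R : realType.

Lemma near0_mul_powR_le (C D e : R) : 0 < e -> 0 < D ->
  \forall x \near 0^'+, forall s, 0 <= s <= x -> C * s `^ e <= D.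
Proof.
move=> e_gt0 D_gt0; set c := D / (`|C| + 1).
have c_gt0 : 0 < c by rewrite divr_gt0 // ltr_wpDl.
near=> x => s /andP [s_ge0 s_le].
have se_le : s `^ e <= c.
  have -> : c = (c `^ e^-1) `^ e by rewrite -powRrM mulVf ?gt_eqF // powRr1 // ltW.
  apply: ge0_ler_powR; rewrite ?nnegrE ?powR_ge0 //; first exact: ltW.
  apply: le_trans s_le _.
  by near: x; apply: nbhs_right_le; exact: powR_gt0.
apply: le_trans (ler_norm _) _; rewrite normrM (ger0_norm (powR_ge0 _ _)).
have : (`|C| + 1) * s `^ e <= D by rewrite -ler_pdivlMl ?ltr_wpDl // mulrC.
by have := powR_ge0 s e; nra.
Unshelve. all: by end_near. Qed.

Lemma near0_mul_le (C D : R) : 0 < D ->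
  \forall x \near 0^'+, forall s, 0 <= s <= x -> C * s <= D.
Proof.
move=> D_gt0; apply: filterS (near0_mul_powR_le C ltr01 D_gt0) => x Cx s s_in.
by have [s_ge0 _] := andP s_in; rewrite -(powRr1 s_ge0) Cx.
Qed.

Lemma near0_exists (P : R -> Prop) (eps : R) : 0 < eps ->
  (\forall x \near 0^'+, P x) -> exists x, [/\ 0 < x, x < eps & P x].
Proof.
move=> eps_gt0 P_near.
suff : \forall x \near 0^'+, [/\ 0 < x, x < eps & P x] by exact: filter_ex.
near=> x; split; near: x; [exact: nbhs_right_gt | exact: nbhs_right_lt | exact: P_near].
Unshelve. all: by end_near. Qed.

End NearZero.

Section NewtonPolygon.
Variables (R : realType) (b : nat -> nat -> R[i]).

Lemma newton_polygon_support i j : b i j != 0 -> newton_polygon b (i%:R, j%:R).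
Proof.
move=> bij; exists 1%N, (fun=> 1), (fun=> (i%:R, j%:R)).
by rewrite !big_ord1 !mul1r; split=> //; split=> //; split=> // _; exists i, j.
Qed.

Lemma newton_polygon_up x y : newton_polygon b x -> x.1 <= y.1 -> x.2 <= y.2 ->
  newton_polygon b y.
Proof.
case=> n [t [P [t_ge0 [t_sum1 [PA Ex]]]]] le1 le2.
pose d1 := y.1 - x.1; pose d2 := y.2 - x.2.
exists n, t, (fun k => ((P k).1 + d1, (P k).2 + d2)); split=> //; split=> //; split.
  move=> k; have [i [j [bij [lei lej]]]] := PA k; exists i, j; split=> //=.
  by split; [apply: le_trans lei _ | apply: le_trans lej _]; rewrite lerDl subr_ge0.
have shift (d : R) (f : 'I_n -> R) :
    \sum_(k < n) t k * (f k + d) = \sum_(k < n) t k * f k + d.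
  by rewrite (eq_bigr (fun k => t k * f k + t k * d)) => [|k _]; rewrite ?mulrDr //
    big_split /= -mulr_suml t_sum1 mul1r.
by rewrite /= !shift /d1 /d2 Ex /= !subrKC; case: y {le1 le2 d1 d2}.
Qed.

Definition weight (al be : R) (x : R * R) := al * x.1 + be * x.2.

Lemma weight_up (al be : R) x y : 0 < al -> 0 < be -> x.1 <= y.1 -> x.2 <= y.2 ->
  weight al be x <= weight al be y ?= iff (x == y).
Proof.
case: x y => [x1 x2] [y1 y2] /= al_gt0 be_gt0 le1 le2; split.
  by rewrite /weight lerD // ler_pM2l.
rewrite /weight /= xpair_eqE; apply/eqP/andP => [E|[/eqP-> /eqP->] //].
have : 0 <= al * (y1 - x1) by rewrite mulr_ge0 ?subr_ge0 // ltW.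
have : 0 <= be * (y2 - x2) by rewrite mulr_ge0 ?subr_ge0 // ltW.
by split; rewrite eq_le ?le1 ?le2 /=; nra.
Qed.

Section UniqueMinimizer.
Variables (al be : R) (i0 j0 : nat).
Hypotheses (al_gt0 : 0 < al) (be_gt0 : 0 < be) (b0 : b i0 j0 != 0).
Hypothesis weight_min : forall i j, b i j != 0 -> (i, j) <> (i0, j0) ->
  weight al be (i0%:R, j0%:R) < weight al be (i%:R, j%:R).

Let v : R * R := (i0%:R, j0%:R).

Lemma quadrants_weight_min y : quadrants b y ->
  weight al be v <= weight al be y /\ (weight al be y = weight al be v -> y = v).
Proof.
case=> i [j [bij [lei lej]]].
have [le_ij eq_ij] := weight_up (x := (i%:R, j%:R)) al_gt0 be_gt0 lei lej.
have [/eqP [ei ej]|ne] := boolP ((i, j) == (i0, j0)).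
  rewrite /v -ei -ej; split=> // /esym/eqP.
  by rewrite eq_ij => /eqP.
have lt_v := weight_min bij (elimN eqP ne).
split=> [|E]; first exact/ltW/(lt_le_trans lt_v).
by have := lt_le_trans lt_v le_ij; rewrite E ltxx.
Qed.

Lemma newton_polygon_weight_min x : newton_polygon b x ->
  weight al be v <= weight al be x /\ (weight al be x = weight al be v -> x = v).
Proof.
case=> n [t [P [t_ge0 [t_sum1 [PA Ex]]]]].
have gap : weight al be x - weight al be v =
    \sum_(k < n) t k * (weight al be (P k) - weight al be v).
  rewrite Ex /weight /= !mulr_sumr -[in LHS](mul1r (al * _)) -[in LHS](mul1r (be * _)).
  rewrite -t_sum1 !mulr_suml -!big_split -sumrB /=.
  by apply: eq_bigr => k _; ring.
have term_ge0 k : 0 <= t k * (weight al be (P k) - weight al be v).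
  by rewrite mulr_ge0 // subr_ge0; case: (quadrants_weight_min (PA k)).
split=> [|/eqP]; first by rewrite -subr_ge0 gap sumr_ge0.
rewrite -subr_eq0 gap psumr_eq0 // => /allP Pv.
have tP k : t k * (P k).1 = t k * v.1 /\ t k * (P k).2 = t k * v.2.
  move: (Pv k (mem_index_enum _)); rewrite /= mulf_eq0 => /orP [/eqP->|].
    by rewrite !mul0r.
  by rewrite subr_eq0 => /eqP /(quadrants_weight_min (PA k)).2 ->.
rewrite Ex (eq_bigr (fun k => t k * v.1)) => [|k _]; last by case: (tP k).
rewrite [X in (_, X)](eq_bigr (fun k => t k * v.2)) => [|k _]; last by case: (tP k).
by rewrite -!mulr_suml t_sum1 !mul1r.
Qed.

Lemma weight_argmin_vertex : np_vertex b v.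
Proof.
split=> [|x y t Nx Ny /andP [t_gt0 t_lt1] Ev]; first exact: newton_polygon_support.
have [lex eqx] := newton_polygon_weight_min Nx.
have [ley eqy] := newton_polygon_weight_min Ny.
have E : weight al be v = t * weight al be x + (1 - t) * weight al be y.
  by rewrite {1}Ev /weight /=; ring.
by split; [apply: eqx | apply: eqy]; nra.
Qed.

End UniqueMinimizer.

Lemma np_vertex_minimal v x : np_vertex b v -> newton_polygon b x ->
  x.1 <= v.1 -> x.2 <= v.2 -> x = v.
Proof.
case=> Nv extreme Nx le1 le2.
pose y := (2 * v.1 - x.1, 2 * v.2 - x.2).
have Ny : newton_polygon b y by apply: newton_polygon_up Nv _ _ => /=; lra.
have half : 0 < (2 : R)^-1 < 1 by rewrite invr_gt0 invf_lt1 //=; lra.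
have [] // := extreme x y _ Nx Ny half.
by rewrite /y; case: v {Nv extreme le1 le2 y Ny} => v1 v2 /=; congr (_, _); field.
Qed.

(* The point u of abscissa v.1 on the line through w and v' lies above v, hence
   in N(q); if w were below the line through v' and v, v' would lie strictly
   inside the segment [w, u]. *)
Lemma np_vertex_edge_supporting al be v' v w : 0 < al -> 0 < be ->
  np_vertex b v' -> newton_polygon b v -> newton_polygon b w ->
  w.1 < v'.1 < v.1 -> weight al be v' = weight al be v ->
  weight al be v' <= weight al be w.
Proof.
case: v' v w => [v1' v2'] [v1 v2] [w1 w2] /= al_gt0 be_gt0 [_ extreme] Nv Nw.
case/andP=> lt_wv' lt_v'v; rewrite /weight /= => Ev; rewrite leNgt; apply/negP => below.
pose s := (v1 - v1') / (v1' - w1).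
have s_gt0 : 0 < s by rewrite divr_gt0 // subr_gt0.
pose u := (v1' + s * (v1' - w1), v2' + s * (v2' - w2)).
have sE : s * (v1' - w1) = v1 - v1' by rewrite /s divfK // gt_eqF // subr_gt0.
have Nu : newton_polygon b u.
  apply: newton_polygon_up Nv _ _; rewrite /u /=; first by rewrite sE subrKC.
  rewrite -(ler_pM2l be_gt0); nra.
pose t := (1 + s)^-1.
have t_in : 0 < t < 1 by rewrite /t invr_gt0 invf_lt1; lra.
have Ev' : (v1', v2') = (t * u.1 + (1 - t) * w1, t * u.2 + (1 - t) * w2).
  by rewrite /t /u /=; congr (_, _); field; lra.
have [_ [Ew1 _]] := extreme u (w1, w2) t Nu Nw t_in Ev'.
by move: lt_wv'; rewrite Ew1 ltxx.
Qed.

Lemma exists_least_nat (P : nat -> Prop) : (exists n, P n) ->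
  exists n, P n /\ forall m, P m -> (n <= m)%N.
Proof.
case=> n Pn; have : exists n, `[< P n >] by exists n; apply/asboolP.
by case/ex_minnP => m /asboolP Pm m_min; exists m; split=> // k /asboolP/m_min.
Qed.

(* Among the minimisers of A i + B j on the support, the one with least i is the
   unique minimiser of the perturbed weight (K A + 1) i + K B j for K > i. *)
Lemma support_weight_argmin_vertex (A B : nat) i j : (0 < B)%N -> b i j != 0 ->
  exists iw jw, [/\ b iw jw != 0, np_vertex b (iw%:R, jw%:R) &
    forall i' j', b i' j' != 0 -> (A * iw + B * jw <= A * i' + B * j')%N].
Proof.
move=> B_gt0 bij.
pose value c := exists i j, b i j != 0 /\ (A * i + B * j)%N = c.
have [c [[i1 [j1 b1c]] c_min]] :=
  exists_least_nat (ex_intro value _ (ex_intro _ i (ex_intro _ j (conj bij erefl)))).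
pose at_c i := exists j, b i j != 0 /\ (A * i + B * j)%N = c.
have [iw [[jw [bw wc]] iw_min]] := exists_least_nat (ex_intro at_c _ (ex_intro _ j1 b1c)).
have w_min i' j' : b i' j' != 0 -> (c <= A * i' + B * j')%N.
  by move=> b'; apply: c_min; exists i', j'.
exists iw, jw; split=> //; first last.
  by move=> i' j' /w_min; rewrite wc.
pose K := iw.+1.
apply: (@weight_argmin_vertex (K * A + 1)%:R (K * B)%:R) => //; rewrite ?ltr0n ?muln_gt0 //.
move=> i' j' b' ne; rewrite /weight /= -!natrM -!natrD ltr_nat.
have wK x y : ((K * A + 1) * x + K * B * y = K * (A * x + B * y) + x)%N by ring.
rewrite !wK wc; have := w_min _ _ b'; rewrite leq_eqVlt => /orP [/eqP c'|lt_c].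
  have le_i := iw_min i' (ex_intro _ j' (conj b' (esym c'))).
  suff : iw != i' by rewrite c'; lia.
  apply/eqP => ei; apply: ne; congr pair => //; apply/eqP.
  by rewrite -(eqn_pmul2l B_gt0); apply/eqP; lia.
by rewrite /K; nia.
Qed.
End NewtonPolygon.

Lemma ler_intercept (R : realFieldType) (A B n m d : R) :
  0 < B -> d <= m + n * A / B -> B * d <= A * n + B * m.
Proof.
move=> B_gt0; rewrite -(ler_pM2l B_gt0) mulrDr mulrCA divff ?gt_eqF // mulr1.
by rewrite addrC [n * A]mulrC.
Qed.

Lemma newton_gap (R : realFieldType) (A B n m d l : R) :
  0 < A -> 0 < B -> 0 < l -> d <= m + n * A / B -> l * (d - m) < n ->
  exists2 kappa, 0 < kappa & forall x y, 1 <= x -> m <= y ->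
    A * n + B * m <= A * x + B * y -> l * d + kappa <= x + l * y.
Proof.
move=> A_gt0 B_gt0 l_gt0 d_le gap.
have Bd := ler_intercept B_gt0 d_le.
have [flat|steep] := lerP B (l * A).
  exists (n + l * m - l * d) => [|x y _ le_my above]; first lra.
  have : 0 <= (l * A - B) * (y - m) by rewrite mulr_ge0 // subr_ge0.
  by move=> ?; rewrite -(ler_pM2l A_gt0); nra.
exists ((B - l * A) / B) => [|x y le_1x _ above]; first by rewrite divr_gt0 ?subr_gt0.
have : 0 <= (B - l * A) * (x - 1) by rewrite mulr_ge0 // subr_ge0 // ltW.
have kB : B * ((B - l * A) / B) = B - l * A by rewrite mulrC divfK // gt_eqF.
by move=> ?; rewrite -(ler_pM2l B_gt0) mulrDr kB; nra.
Qed.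

Section LastEdge.
Variables (R : realType) (b : nat -> nat -> R[i]) (n_s m_s n_s1 m_s1 : nat).
Hypotheses (vs : np_vertex b (n_s%:R, m_s%:R)) (vs1 : np_vertex b (n_s1%:R, m_s1%:R)).
Hypothesis n_lt : (n_s1 < n_s)%N.
Hypothesis last_vertex : forall v, np_vertex b v -> v.1 <= n_s%:R.
Hypothesis prev_vertex : forall v, np_vertex b v -> v.1 < n_s%:R -> v.1 <= n_s1%:R.

Lemma last_edge_descends : (m_s < m_s1)%N.
Proof.
rewrite ltnNge; apply/negP => le_m.
have N : newton_polygon b (n_s1%:R, m_s%:R).
  by apply: newton_polygon_up vs1.1 _ _; rewrite /= ?ler_nat.
have [/eqP] : (n_s1%:R, m_s%:R) = (n_s%:R, m_s%:R) :> R * R.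
  by apply: np_vertex_minimal vs N _ _; rewrite /= ler_nat // ltnW.
by rewrite eqr_nat (ltn_eqF n_lt).
Qed.

Lemma support_above_last_vertex i j : b i j != 0 -> (m_s <= j)%N.
Proof.
move=> bij; rewrite leqNgt; apply/negP => lt_j.
have [iw [jw [bw vw w_min]]] := @support_weight_argmin_vertex _ b 0 1 _ _ isT bij.
have le_jw : (jw <= j)%N by have := w_min _ _ bij; rewrite !mul0n !mul1n.
have le_iw : (iw <= n_s)%N by rewrite -(ler_nat R); apply: last_vertex vw.
have N : newton_polygon b (n_s%:R, jw%:R).
  by apply: newton_polygon_up (newton_polygon_support bw) _ _; rewrite /= ?ler_nat.
have [/eqP] : (n_s%:R, jw%:R) = (n_s%:R, m_s%:R) :> R * R.
  by apply: np_vertex_minimal vs N _ _; rewrite /= ?lexx ?ler_nat //; lia.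
by rewrite eqr_nat; lia.
Qed.

Lemma support_above_last_edge i j : b i j != 0 ->
  ((m_s1 - m_s) * n_s + (n_s - n_s1) * m_s <= (m_s1 - m_s) * i + (n_s - n_s1) * j)%N.
Proof.
have m_lt := last_edge_descends.
set A := (m_s1 - m_s)%N; set B := (n_s - n_s1)%N.
have B_gt0 : (0 < B)%N by rewrite /B; lia.
have edge : (A * n_s + B * m_s = A * n_s1 + B * m_s1)%N.
  by rewrite -{1}(subnKC (ltnW n_lt)) -/B -(subnKC (ltnW m_lt)) -/A; ring.
move=> bij; rewrite leqNgt; apply/negP => below.
have [iw [jw [bw vw w_min]]] := support_weight_argmin_vertex A B_gt0 bij.
have w_below := leq_ltn_trans (w_min _ _ bij) below.
have le_jw := support_above_last_vertex bw.
have lt_iw : (iw < n_s)%N.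
  rewrite ltnNge; apply/negP => le_iw; move: w_below.
  by rewrite ltnNge leq_add ?leq_mul2l ?le_iw ?le_jw ?orbT.
have := prev_vertex vw; rewrite /= !ltr_nat ler_nat => /(_ lt_iw).
rewrite leq_eqVlt => /orP [/eqP e_iw|lt_iw1].
  have lt_jw : (jw < m_s1)%N.
    by rewrite -(ltn_pmul2l B_gt0) -(ltn_add2l (A * n_s1)) -edge -e_iw.
  have [_ /eqP] : (iw%:R, jw%:R) = (n_s1%:R, m_s1%:R) :> R * R.
    apply: np_vertex_minimal vs1 (newton_polygon_support bw) _ _;
      by rewrite /= ler_nat ?e_iw // ltnW.
  by rewrite eqr_nat ltn_eqF.
have := @np_vertex_edge_supporting _ b A%:R B%:R _ _ (iw%:R, jw%:R) _ _ vs1 vs.1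
  (newton_polygon_support bw).
rewrite /weight /= !ltr_nat lt_iw1 n_lt -!natrM -!natrD ler_nat !ltr0n -edge.
have A_gt0 : (0 < A)%N by rewrite /A subn_gt0.
by move=> /(_ A_gt0 B_gt0 isT erefl); rewrite leqNgt w_below.
Qed.

Lemma support_weighted_gap (delta : nat) (l : R) : 0 < l ->
  delta%:R <= m_s%:R + n_s%:R * (m_s1%:R - m_s%:R) / (n_s%:R - n_s1%:R) :> R ->
  l * (delta%:R - m_s%:R) < n_s%:R ->
  exists2 kappa : R, 0 < kappa &
    (forall j, b 0 j != 0 -> (delta <= j)%N) /\
    (forall i j, b i.+1 j != 0 -> l * delta%:R + kappa <= i.+1%:R + l * j%:R).
Proof.
move=> l_gt0 delta_le gap.
have m_lt := last_edge_descends.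
set A : R := m_s1%:R - m_s%:R; set B : R := n_s%:R - n_s1%:R.
have A_gt0 : 0 < A by rewrite subr_gt0 ltr_nat.
have B_gt0 : 0 < B by rewrite subr_gt0 ltr_nat.
have above i j : b i j != 0 -> A * n_s%:R + B * m_s%:R <= A * i%:R + B * j%:R.
  move/support_above_last_edge; rewrite -(ler_nat R) !natrD !natrM.
  by rewrite !natrB // ltnW.
have [kappa kappa_gt0 gapP] := newton_gap A_gt0 B_gt0 l_gt0 delta_le gap.
exists kappa => //; split=> [j b0j|i j bij]; last first.
  by apply: gapP (above _ _ bij); rewrite ?ler1n // ler_nat (support_above_last_vertex bij).
rewrite -(ler_nat R) -(ler_pM2l B_gt0) (le_trans (ler_intercept B_gt0 delta_le)) //.
by have := above _ _ b0j; rewrite mulr0 add0r.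
Qed.
End LastEdge.

(* Half of the gap kappa pays for a factor t^(eta e), which is geometric in i and j
   for e = i + l j as soon as 2 t^eta <= rho and 2 t^(eta l) <= rho. *)
Lemma powR_gap_split (R : realType) (t E kappa e : R) :
  0 < t <= 1 -> 0 <= E -> 0 < kappa -> E + kappa <= e ->
  t `^ e <= t `^ (E + kappa / 2) * t `^ (kappa / (2 * (kappa + E)) * e).
Proof.
move=> t01 E_ge0 kappa_gt0 le_e; have [t_gt0 _] := andP t01.
rewrite -powRD; last by apply/implyP => _; rewrite gt_eqF.
apply: (ger_powR t01); set eta := kappa / (2 * (kappa + E)).
have kE_gt0 : 0 < kappa + E by lra.
have eta_E : eta * (kappa + E) = kappa / 2 by rewrite /eta; field; rewrite gt_eqF.
have eta_le1 : eta <= 1 by rewrite /eta ler_pdivrMr; lra.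
have : 0 <= (1 - eta) * (e - (kappa + E)) by apply: mulr_ge0; lra.
nra.
Qed.

Section HalfGeometricMajorant.
Variable R : realType.
Local Notation half := ((2 : R)^-1).

Lemma sum_halfX_le n : \sum_(k < n) half ^+ k <= 2.
Proof.
have -> : \sum_(k < n) half ^+ k = 2 - 2 * half ^+ n.
  elim: n => [|n IHn]; first by rewrite big_ord0 expr0 mulr1 subrr.
  by rewrite big_ord_recr /= IHn exprS; field.
by rewrite lerBlDr lerDl mulr_ge0 // exprn_ge0 // invr_ge0.
Qed.

Lemma cmod_sum_halfX_le n (F : 'I_n -> R[i]) C : 0 <= C ->
  (forall k, cmod (F k) <= C * half ^+ k) -> cmod (\sum_k F k) <= 2 * C.
Proof.
move=> C_ge0 FC; apply: le_trans (cmod_sum _ _) _.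
apply: le_trans (ler_sum _ (fun k _ => FC k)) _.
by rewrite -mulr_sumr mulrC ler_wpM2r // sum_halfX_le.
Qed.

Lemma cmod_sum2_halfX_le n (F : 'I_n -> 'I_n -> R[i]) C : 0 <= C ->
  (forall i j, cmod (F i j) <= C * half ^+ i * half ^+ j) ->
  cmod (\sum_i \sum_j F i j) <= 4 * C.
Proof.
move=> C_ge0 FC; have -> : 4 * C = 2 * (2 * C) by ring.
apply: cmod_sum_halfX_le => [|i]; first by rewrite mulr_ge0.
rewrite -mulrA; apply: cmod_sum_halfX_le => [|j]; last exact: FC.
by rewrite mulr_ge0 // exprn_ge0 // invr_ge0.
Qed.

End HalfGeometricMajorant.

Section CauchyEstimates.
Variables (R : realType) (rho M : R).
Hypothesis rho_gt0 : 0 < rho.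
Local Notation half := ((2 : R)^-1).
Let rho_ge0 : 0 <= rho := ltW rho_gt0.

Lemma ratio_expn_le (s : R) m k : 0 <= s -> 2 * s <= rho -> (m <= k)%N ->
  (s / rho) ^+ k <= (2 * s / rho) ^+ m * half ^+ k.
Proof.
move=> s_ge0 s_le le_mk.
have -> : (s / rho) ^+ k = (2 * s / rho) ^+ k * half ^+ k.
  by rewrite -exprMn; congr (_ ^+ _); field; rewrite gt_eqF.
apply: ler_wpM2r; first by rewrite exprn_ge0 // invr_ge0.
apply: ler_wiXn2l => //; first by rewrite divr_ge0 ?mulr_ge0.
by rewrite ler_pdivrMr // mul1r.
Qed.

Lemma coef_bound_ge0 (x : R[i]) k : cmod x * rho ^+ k <= M -> 0 <= M.
Proof. by apply: le_trans; rewrite mulr_ge0 ?cmod_ge0 ?exprn_ge0. Qed.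

Lemma coef_term_le (x z : R[i]) k : cmod x * rho ^+ k <= M ->
  cmod (x * z ^+ k) <= M * (cmod z / rho) ^+ k.
Proof.
move=> x_le; rewrite cmodM cmodX expr_div_n mulrA mulrAC.
by apply: ler_wpM2r; rewrite ?exprn_ge0 ?cmod_ge0 // ler_pdivlMr ?exprn_gt0.
Qed.

Lemma coef_term2_le (x z w : R[i]) i j : cmod x * rho ^+ (i + j) <= M ->
  cmod (x * z ^+ i * w ^+ j) <= M * (cmod z / rho) ^+ i * (cmod w / rho) ^+ j.
Proof.
move=> x_le.
have -> : M * (cmod z / rho) ^+ i * (cmod w / rho) ^+ j =
    M / rho ^+ (i + j) * (cmod z ^+ i * cmod w ^+ j).
  by rewrite !expr_div_n exprD; field; rewrite !expf_neq0 // gt_eqF.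
rewrite !cmodM !cmodX -mulrA; apply: ler_wpM2r.
  by rewrite mulr_ge0 // exprn_ge0 // cmod_ge0.
by rewrite ler_pdivlMr // exprn_gt0.
Qed.

Lemma low_term_le (x w : R[i]) j d : cmod x * rho ^+ j <= M -> (d <= j)%N ->
  2 * cmod w <= rho -> cmod (x * w ^+ j) <= M * (2 * cmod w / rho) ^+ d * half ^+ j.
Proof.
move=> x_le le_dj w_le; apply: le_trans (coef_term_le _ x_le) _.
have M_ge0 := coef_bound_ge0 x_le.
by rewrite -mulrA ler_wpM2l // ratio_expn_le ?cmod_ge0.
Qed.

Lemma gap_term_le (x z w : R[i]) (l E kappa : R) i j :
  let eta := kappa / (2 * (kappa + E)) in
  cmod x * rho ^+ (i + j) <= M -> 0 < l -> 0 <= E -> 0 < kappa ->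
  0 < cmod z <= 1 -> cmod w <= cmod z `^ l -> E + kappa <= i%:R + l * j%:R ->
  2 * cmod z `^ eta <= rho -> 2 * cmod z `^ (eta * l) <= rho ->
  cmod (x * z ^+ i * w ^+ j) <= M * cmod z `^ (E + kappa / 2) * half ^+ i * half ^+ j.
Proof.
move=> eta x_le l_gt0 E_ge0 kappa_gt0 z01 w_le gap z_eta z_etal.
set t := cmod z in z01 w_le z_eta z_etal *; have [t_gt0 _] := andP z01.
have M_ge0 := coef_bound_ge0 x_le.
have split_pow a : (t `^ a / rho) ^+ i * (t `^ (a * l) / rho) ^+ j =
    t `^ (a * (i%:R + l * j%:R)) / rho ^+ (i + j).
  have powX (c : R) n : (t `^ c) ^+ n = t `^ (c * n%:R).
    by rewrite powRrM powR_mulrn // powR_ge0.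
  rewrite !expr_div_n !powX mulrDr mulrA powRD; last by apply/implyP => _; rewrite gt_eqF.
  by rewrite exprD mulrAC [a * l * _]mulrAC; field; rewrite !expf_neq0 // gt_eqF.
have step1 : cmod (x * z ^+ i * w ^+ j) <= M * (t `^ (i%:R + l * j%:R) / rho ^+ (i + j)).
  rewrite -[i%:R + _]mul1r -split_pow (powRr1 (ltW t_gt0)) mul1r mulrA.
  apply: le_trans (coef_term2_le z w x_le) _; apply: ler_wpM2l.
    by rewrite mulr_ge0 // exprn_ge0 // divr_ge0 ?cmod_ge0.
  apply: lerXn2r; rewrite ?nnegrE ?divr_ge0 ?powR_ge0 ?cmod_ge0 //.
  by rewrite ler_pM2r ?invr_gt0.
have step2 := powR_gap_split z01 E_ge0 kappa_gt0 gap.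
have step3 : t `^ (eta * (i%:R + l * j%:R)) / rho ^+ (i + j) <= half ^+ i * half ^+ j.
  rewrite -split_pow; apply: ler_pM; rewrite ?exprn_ge0 ?divr_ge0 ?powR_ge0 //.
    by have := ratio_expn_le (powR_ge0 t eta) z_eta (leq0n i); rewrite expr0 mul1r.
  by have := ratio_expn_le (powR_ge0 t (eta * l)) z_etal (leq0n j); rewrite expr0 mul1r.
apply: le_trans step1 _; rewrite -[M * _ * _ * _]mulrA -[M * _ * _]mulrA.
apply: ler_wpM2l => //.
apply: le_trans (ler_wpM2r _ step2) _; first by rewrite invr_ge0 exprn_ge0.
by rewrite -(mulrA (t `^ _)); apply: ler_wpM2l; rewrite ?powR_ge0.
Qed.
End CauchyEstimates.

Section LeadingTerm.
Variables (R : realType) (p : R[i] -> R[i]) (c : nat -> R[i]) (a : R[i]).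
Variables (delta : nat) (rho M : R).
Hypotheses (rho_gt0 : 0 < rho) (c_bound : forall k, cmod (c k) * rho ^+ k <= M).
Hypothesis p_sum : forall z, cmod z < rho -> cconv (psum1 c z) (p z).
Hypotheses (c_low : forall k, (k < delta)%N -> c k = 0) (c_delta : c delta = a).

Lemma psum1_sub_leading_le z N : 2 * cmod z <= rho -> (delta < N)%N ->
  cmod (psum1 c z N - a * z ^+ delta) <= 2 * (M * (2 * cmod z / rho) ^+ delta.+1).
Proof.
move=> z_le lt_dN; have M_ge0 := coef_bound_ge0 rho_gt0 (c_bound 0).
have C_ge0 : 0 <= M * (2 * cmod z / rho) ^+ delta.+1.
  by rewrite mulr_ge0 // exprn_ge0 // divr_ge0 ?mulr_ge0 ?cmod_ge0 // ltW.
rewrite /psum1 (bigD1 (Ordinal lt_dN)) //= c_delta addrAC subrr add0r big_mkcond /=.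
apply: cmod_sum_halfX_le => // k; case: ifPn => [ne_k|_].
  have [lt_k|gt_k|eq_k] := ltngtP k delta.
  - by rewrite c_low // mul0r cmod0 mulr_ge0 // exprn_ge0 // invr_ge0.
  - by have := low_term_le rho_gt0 (c_bound k) gt_k z_le.
  - by move: ne_k; rewrite -(inj_eq val_inj) /= eq_k eqxx.
by rewrite cmod0 mulr_ge0 // exprn_ge0 // invr_ge0.
Qed.

Lemma p_sub_leading_le z : 2 * cmod z <= rho ->
  cmod (p z - a * z ^+ delta) <= 2 * (M * (2 * cmod z / rho) ^+ delta.+1).
Proof.
move=> z_le; have z_lt : cmod z < rho by have := cmod_ge0 z; move: rho_gt0; lra.
apply: (cconv_cmod_le (N := delta.+1) (p_sum z_lt)) => n.
exact: psum1_sub_leading_le.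
Qed.

Lemma p_comparable_leading z : 2 * cmod z <= rho ->
  4 * M * (2 / rho) ^+ delta.+1 * cmod z <= cmod a ->
  cmod a * cmod z ^+ delta / 2 <= cmod (p z) <= 3 * (cmod a * cmod z ^+ delta) / 2.
Proof.
move=> z_le small; set t := cmod z in z_le small *.
have err : cmod (p z - a * z ^+ delta) <= cmod a * t ^+ delta / 2.
  apply: le_trans (p_sub_leading_le z_le) _; rewrite -/t.
  have -> : 2 * (M * (2 * t / rho) ^+ delta.+1) =
      4 * M * (2 / rho) ^+ delta.+1 * t * t ^+ delta / 2.
    rewrite [2 * t / rho]mulrAC exprMn [t ^+ delta.+1]exprSr.
    by set u := (2 / rho) ^+ _; set v := t ^+ _; field.
  apply: ler_wpM2r; first by rewrite invr_ge0.
  by apply: ler_wpM2r small; rewrite exprn_ge0 // cmod_ge0.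
have leading : cmod (a * z ^+ delta) = cmod a * t ^+ delta by rewrite cmodM cmodX.
have lower := cmodB (p z) (p z - a * z ^+ delta).
have upper := cmodD (p z - a * z ^+ delta) (a * z ^+ delta).
rewrite opprB addrC subrK leading in lower; rewrite subrK leading in upper.
apply/andP; split; lra.
Qed.

End LeadingTerm.

Section GapTermsBound.
Variables (R : realType) (q : R[i] -> R[i] -> R[i]) (b : nat -> nat -> R[i]).
Variables (delta : nat) (l kappa rho M : R).
Hypotheses (rho_gt0 : 0 < rho) (b_bound : forall i j, cmod (b i j) * rho ^+ (i + j) <= M).
Hypothesis q_sum : forall z w, cmod z < rho -> cmod w < rho -> cconv (psum2 b z w) (q z w).
Hypotheses (l_gt0 : 0 < l) (kappa_gt0 : 0 < kappa) (delta_ge2 : (2 <= delta)%N).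
Hypothesis axis_support : forall j, b 0 j != 0 -> (delta <= j)%N.
Hypothesis off_axis_gap :
  forall i j, b i.+1 j != 0 -> l * delta%:R + kappa <= i.+1%:R + l * j%:R.

Let eta := kappa / (2 * (kappa + l * delta%:R)).

Section AtPoint.
Variables (z w : R[i]) (r : R).
Let t := cmod z.
Hypotheses (z01 : 0 < t <= 1) (r01 : 0 <= r <= 1) (r_le : 2 * r <= rho).
Hypothesis w_le : cmod w <= r * t `^ l.
Hypotheses (z_eta : 2 * t `^ eta <= rho) (z_etal : 2 * t `^ (eta * l) <= rho).

Let C := M * ((2 * r / rho) ^+ 2 + t `^ (kappa / 2)) * t `^ (l * delta%:R).

Let t_gt0 : 0 < t. Proof. by case/andP: z01. Qed.
Let rho_ge0 : 0 <= rho := ltW rho_gt0.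
Let M_ge0 : 0 <= M := coef_bound_ge0 rho_gt0 (b_bound 0 0).

Let w_tl : cmod w <= t `^ l.
Proof. by apply: le_trans w_le _; rewrite ler_piMl ?powR_ge0 //; case/andP: r01. Qed.

Let w_rho : 2 * cmod w <= rho.
Proof.
have tl_le1 : t `^ l <= 1 by rewrite -(powRr0 t); apply: (ger_powR z01); exact: ltW.
apply: le_trans r_le; rewrite ler_pM2l //; apply: le_trans w_le _.
by case/andP: r01 => r_ge0 _; rewrite ler_piMr.
Qed.

Lemma psum2_bound_ge0 : 0 <= C.
Proof.
have [r_ge0 _] := andP r01.
by rewrite !mulr_ge0 ?addr_ge0 ?exprn_ge0 ?powR_ge0 ?divr_ge0 ?mulr_ge0 // ltW.
Qed.

Lemma axis_term_le j : b 0 j != 0 -> cmod (b 0 j * w ^+ j) <= C * 2^-1 ^+ j.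
Proof.
move=> b0j; have [r_ge0 _] := andP r01.
apply: le_trans (low_term_le rho_gt0 (b_bound 0 j) (axis_support b0j) w_rho) _.
apply: ler_wpM2r; first by rewrite exprn_ge0 // invr_ge0.
rewrite /C -[M * _ * _]mulrA; apply: ler_wpM2l => //.
apply: (@le_trans _ _ ((2 * r / rho) ^+ 2 * t `^ (l * delta%:R))); last first.
  by apply: ler_wpM2r; rewrite ?powR_ge0 // lerDl powR_ge0.
apply: (@le_trans _ _ ((2 * r / rho * t `^ l) ^+ delta)).
  apply: lerXn2r; rewrite ?nnegrE ?mulr_ge0 ?invr_ge0 ?powR_ge0 ?cmod_ge0 //.
  have -> : 2 * r / rho * t `^ l = 2 * (r * t `^ l) / rho by rewrite mulrAC mulrA.
  by rewrite ler_pM2r ?invr_gt0 // ler_pM2l.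
rewrite exprMn powRrM -(powR_mulrn _ (powR_ge0 _ _)) -powRrM.
apply: ler_wpM2r; first exact: powR_ge0.
apply: ler_wiXn2l; rewrite ?divr_ge0 ?mulr_ge0 //.
by rewrite ler_pdivrMr // mul1r.
Qed.

Lemma off_axis_term_le i j : b i.+1 j != 0 ->
  cmod (b i.+1 j * z ^+ i.+1 * w ^+ j) <= C * 2^-1 ^+ i.+1 * 2^-1 ^+ j.
Proof.
move=> bij; have lE_ge0 : 0 <= l * delta%:R by rewrite mulr_ge0 // ltW.
apply: le_trans (gap_term_le rho_gt0 (b_bound _ _) l_gt0 lE_ge0 kappa_gt0 z01 w_tl
  (off_axis_gap bij) z_eta z_etal) _.
have h_ge0 k : 0 <= (2 : R)^-1 ^+ k by rewrite exprn_ge0 // invr_ge0.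
apply: ler_wpM2r => //; apply: ler_wpM2r => //.
rewrite /C -[M * _ * _]mulrA; apply: ler_wpM2l => //.
rewrite addrC powRD; last by apply/implyP => _; rewrite gt_eqF.
have [r_ge0 _] := andP r01.
by rewrite mulrDl lerDr mulr_ge0 ?exprn_ge0 ?divr_ge0 ?mulr_ge0 ?powR_ge0.
Qed.

Lemma psum2_term_le i j : cmod (b i j * z ^+ i * w ^+ j) <= C * 2^-1 ^+ i * 2^-1 ^+ j.
Proof.
have h_ge0 k : 0 <= (2 : R)^-1 ^+ k by rewrite exprn_ge0 // invr_ge0.
have [->|bij] := eqVneq (b i j) 0.
  by rewrite !mul0r cmod0 mulr_ge0 ?h_ge0 // mulr_ge0 ?h_ge0 ?psum2_bound_ge0.
case: i bij => [|i] bij; last exact: off_axis_term_le.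
by rewrite expr0 mulr1 mulr1; apply: axis_term_le.
Qed.

Lemma q_le : 2 * t <= rho -> cmod (q z w) <= 4 * C.
Proof.
move=> z_rho.
have z_lt : cmod z < rho by move: rho_gt0 t_gt0; rewrite -/t; lra.
have w_lt : cmod w < rho by move: rho_gt0 w_rho (cmod_ge0 w); lra.
rewrite -[q z w]subr0; apply: (cconv_cmod_le (N := 0) (q_sum z_lt w_lt)) => n _.
by rewrite subr0; apply: cmod_sum2_halfX_le psum2_bound_ge0 psum2_term_le.
Qed.

End AtPoint.
End GapTermsBound.

Section Invariance.
Variables (R : realType) (p : R[i] -> R[i]) (q : R[i] -> R[i] -> R[i]).
Variables (c : nat -> R[i]) (b : nat -> nat -> R[i]) (a : R[i]).
Variables (delta : nat) (rho M l kappa : R).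
Hypotheses (rho_gt0 : 0 < rho) (c_bound : forall k, cmod (c k) * rho ^+ k <= M).
Hypothesis b_bound : forall i j, cmod (b i j) * rho ^+ (i + j) <= M.
Hypothesis p_sum : forall z, cmod z < rho -> cconv (psum1 c z) (p z).
Hypothesis q_sum : forall z w, cmod z < rho -> cmod w < rho -> cconv (psum2 b z w) (q z w).
Hypotheses (delta_ge2 : (2 <= delta)%N) (a_neq0 : a != 0).
Hypotheses (c_low : forall k, (k < delta)%N -> c k = 0) (c_delta : c delta = a).
Hypotheses (l_gt0 : 0 < l) (kappa_gt0 : 0 < kappa).
Hypothesis axis_support : forall j, b 0 j != 0 -> (delta <= j)%N.
Hypothesis off_axis_gap :
  forall i j, b i.+1 j != 0 -> l * delta%:R + kappa <= i.+1%:R + l * j%:R.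

Let K := (cmod a / 2) `^ l.
Let eta := kappa / (2 * (kappa + l * delta%:R)).

Section AtPoint.
Variables (z w : R[i]) (r1 r2 : R).
Let t := cmod z.
Hypotheses (t_gt0 : 0 < t) (t_lt : t < r1) (t_le1 : t <= 1) (t_rho : 2 * t <= rho).
Hypothesis t_lead : 4 * M * (2 / rho) ^+ delta.+1 * t <= cmod a.
Hypothesis t_a : 2 * cmod a * t <= 1.

Lemma p_image_lt : cmod (p z) < r1.
Proof.
have [_ p_hi] := andP (p_comparable_leading rho_gt0 c_bound p_sum c_low c_delta t_rho t_lead).
have tX : t ^+ delta <= t * t.
  by rewrite -expr2 ler_wiXn2l // ltW.
have a_ge0 := cmod_ge0 a.
have : cmod a * t ^+ delta <= cmod a * (t * t) by rewrite ler_wpM2l.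
by move: p_hi t_lt t_a t_gt0; rewrite -/t; nra.
Qed.

Hypotheses (t_eta : 2 * t `^ eta <= rho) (t_etal : 2 * t `^ (eta * l) <= rho).
Hypothesis t_kappa : 16 * M * t `^ (kappa / 2) <= r2 * K.
Hypotheses (r2_gt0 : 0 < r2) (r2_le1 : r2 <= 1) (r2_rho : 2 * r2 <= rho).
Hypothesis r2_K : 64 * M * r2 <= K * rho ^+ 2.
Hypothesis w_lt : cmod w < r2 * t `^ l.

Lemma q_image_lt : cmod (q z w) < r2 * cmod (p z) `^ l.
Proof.
have M_ge0 := coef_bound_ge0 rho_gt0 (c_bound 0).
have K_gt0 : 0 < K by rewrite powR_gt0 // divr_gt0 // cmod_gt0.
set P := t `^ (l * delta%:R); have P_gt0 : 0 < P by rewrite powR_gt0.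
have q_bound := q_le rho_gt0 b_bound q_sum l_gt0 kappa_gt0 delta_ge2 axis_support
  off_axis_gap (z := z) (r := r2) (ltac:(by apply/andP)) (ltac:(by rewrite ltW))
  r2_rho (ltW w_lt) t_eta t_etal t_rho.
have KP : K * P <= cmod (p z) `^ l.
  have [p_lo _] := andP (p_comparable_leading rho_gt0 c_bound p_sum c_low c_delta t_rho t_lead).
  have t_ge0 := ltW t_gt0.
  have -> : K * P = (cmod a * t ^+ delta / 2) `^ l.
    rewrite [_ * _ / 2]mulrAC (powRM _ (divr_ge0 (cmod_ge0 a) _) (exprn_ge0 _ t_ge0)) //.
    by rewrite /K /P -(powR_mulrn _ t_ge0) -powRrM [_ * l]mulrC.
  apply: ge0_ler_powR (ltW l_gt0) _ _ _ _ p_lo; rewrite nnegrE ?cmod_ge0 //.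
  by rewrite divr_ge0 ?mulr_ge0 ?cmod_ge0 ?exprn_ge0.
have small_r2 : 4 * (M * (2 * r2 / rho) ^+ 2) <= r2 * K / 4.
  have -> : 4 * (M * (2 * r2 / rho) ^+ 2) = r2 * (64 * M * r2) / (4 * rho ^+ 2).
    by field; rewrite gt_eqF.
  rewrite ler_pdivrMr ?mulr_gt0 ?exprn_gt0 //.
  by move: r2_K r2_gt0; nra.
have small_t : 4 * (M * t `^ (kappa / 2)) <= r2 * K / 4 by move: t_kappa; lra.
have q_le_half : cmod (q z w) <= r2 * K / 2 * P.
  apply: le_trans q_bound _.
  have -> : 4 * (M * ((2 * r2 / rho) ^+ 2 + t `^ (kappa / 2)) * P) =
      (4 * (M * (2 * r2 / rho) ^+ 2) + 4 * (M * t `^ (kappa / 2))) * P by ring.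
  by apply: ler_wpM2r; [exact: ltW | lra].
have := ler_wpM2l (ltW r2_gt0) KP.
have : 0 < r2 * K * P by rewrite !mulr_gt0.
lra.
Qed.

End AtPoint.

Lemma U_set_invariant_near : \forall r2 \near 0^'+, \forall r1 \near 0^'+,
  forall z w, U_set l r1 r2 (z, w) -> U_set l r1 r2 (p z, q z w).
Proof.
have K_gt0 : 0 < K by rewrite powR_gt0 // divr_gt0 // cmod_gt0.
have eta_gt0 : 0 < eta.
  by rewrite divr_gt0 // mulr_gt0 // addr_gt0 // mulr_gt0 // ltr0n; case: delta delta_ge2.
near=> r2.
have r2_gt0 : 0 < r2 by near: r2; exact: nbhs_right_gt.
have r2_le1 : r2 <= 1 by near: r2; exact: nbhs_right_le.
have r2_rho : forall s, 0 <= s <= r2 -> 2 * s <= rho by near: r2; exact: near0_mul_le.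
have r2_K : forall s, 0 <= s <= r2 -> 64 * M * s <= K * rho ^+ 2.
  by near: r2; apply: near0_mul_le; rewrite mulr_gt0 ?exprn_gt0.
have r2_in : 0 <= r2 <= r2 by rewrite lexx ltW.
near=> r1.
have r1_le1 : r1 <= 1 by near: r1; exact: nbhs_right_le.
have t_rho : forall s, 0 <= s <= r1 -> 2 * s <= rho by near: r1; exact: near0_mul_le.
have t_lead : forall s, 0 <= s <= r1 -> 4 * M * (2 / rho) ^+ delta.+1 * s <= cmod a.
  by near: r1; apply: near0_mul_le; rewrite cmod_gt0.
have t_a : forall s, 0 <= s <= r1 -> 2 * cmod a * s <= 1 by near: r1; exact: near0_mul_le.
have t_eta : forall s, 0 <= s <= r1 -> 2 * s `^ eta <= rho.
  by near: r1; exact: near0_mul_powR_le.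
have t_etal : forall s, 0 <= s <= r1 -> 2 * s `^ (eta * l) <= rho.
  by near: r1; apply: near0_mul_powR_le => //; exact: mulr_gt0.
have t_kappa : forall s, 0 <= s <= r1 -> 16 * M * s `^ (kappa / 2) <= r2 * K.
  by near: r1; apply: near0_mul_powR_le; [exact: divr_gt0 | exact: mulr_gt0].
move=> z w [/= z_lt w_lt]; set t := cmod z in z_lt w_lt.
have t_gt0 : 0 < t.
  apply: (gt0_powR l_gt0 (cmod_ge0 z)); rewrite -(pmulr_rgt0 _ r2_gt0).
  exact: le_lt_trans (cmod_ge0 w) w_lt.
have t_in : 0 <= t <= r1 by rewrite !ltW.
have t_le1 := ltW (lt_le_trans z_lt r1_le1).
split; first exact: p_image_lt t_gt0 z_lt t_le1 (t_rho t t_in) (t_lead t t_in) (t_a t t_in).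
exact: q_image_lt t_gt0 t_le1 (t_rho t t_in) (t_lead t t_in) (t_eta t t_in)
  (t_etal t t_in) (t_kappa t t_in) r2_gt0 r2_le1 (r2_rho r2 r2_in) (r2_K r2 r2_in) w_lt.
Unshelve. all: by end_near. Qed.
End Invariance.

Theorem theorem2p2 (R : realType)
    (p : R[i] -> R[i]) (q : R[i] -> R[i] -> R[i])
    (c : nat -> R[i]) (b : nat -> nat -> R[i])
    (a : R[i]) (delta : nat) (rho M : R)
    (* holomorphic germs near 0: convergent power series on a polydisk *)
    (Hrho : 0 < rho)
    (Hc_bound : forall k, cmod (c k) * rho ^+ k <= M)
    (Hb_bound : forall i j, cmod (b i j) * rho ^+ (i + j) <= M)
    (Hp : forall z, cmod z < rho -> cconv (psum1 c z) (p z))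
    (Hq : forall z w, cmod z < rho -> cmod w < rho -> cconv (psum2 b z w) (q z w))
    (* p(z) = a z^delta + O(z^(delta+1)), a <> 0, delta >= 2 *)
    (Hdelta : (2 <= delta)%N) (Ha : a != 0)
    (Hc_low : forall k, (k < delta)%N -> c k = 0) (Hc_delta : c delta = a)
    (* b_00 = b_01 = 0 *)
    (Hb00 : b 0%N 0%N = 0) (Hb01 : b 0%N 1%N = 0)
    (* the last two vertices (n_{s-1},m_{s-1}), (n_s,m_s) of N(q), s > 1 *)
    (n_s m_s n_s1 m_s1 : nat)
    (Hvs : np_vertex b (n_s%:R, m_s%:R))
    (Hvs1 : np_vertex b (n_s1%:R, m_s1%:R))
    (Hlt : (n_s1 < n_s)%N)
    (Hlast : forall v, np_vertex b v -> v.1 <= n_s%:R)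
    (Hprev : forall v, np_vertex b v -> v.1 < n_s%:R -> v.1 <= n_s1%:R)
    (* Case 2: delta <= T_{s-1}, the y-intercept of the last edge *)
    (Hcase2 : delta%:R <= m_s%:R + n_s%:R * (m_s1%:R - m_s%:R) / (n_s%:R - n_s1%:R) :> R)
    (* (gamma, d) = (n_s, m_s); alpha = gamma / (delta - d) *)
    (l : R)
    (Hl : if (delta <= m_s)%N then 0 < l
          else (0 < l) && (l < n_s%:R / (delta%:R - m_s%:R))) :
  forall eps : R, 0 < eps ->
    exists r1 r2 : R, 0 < r1 /\ r1 < eps /\ 0 < r2 /\ r2 < eps /\
      forall z w, U_set l r1 r2 (z, w) -> U_set l r1 r2 (p z, q z w).
Proof.
(* Hb00 and Hb01 are not needed: in Case 2 the support on the axis i = 0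
   already satisfies j >= T_{s-1} >= delta >= 2. *)
move=> eps eps_gt0.
have n_s_gt0 : 0 < n_s%:R :> R by rewrite ltr0n (leq_ltn_trans _ Hlt).
have [l_gt0 l_slope] : 0 < l /\ l * (delta%:R - m_s%:R) < n_s%:R.
  case: leqP Hl => [le_dm l_gt0 | lt_md /andP [l_gt0]]; split=> //.
    by apply: le_lt_trans n_s_gt0; rewrite pmulr_rle0 // subr_le0 ler_nat.
  by rewrite -ltr_pdivlMr // subr_gt0 ltr_nat.
have [kappa kappa_gt0 [axis off_axis]] :=
  support_weighted_gap Hvs Hvs1 Hlt Hlast Hprev l_gt0 Hcase2 l_slope.
have := U_set_invariant_near Hrho Hc_bound Hb_bound Hp Hq Hdelta Ha Hc_low Hc_delta
  l_gt0 kappa_gt0 axis off_axis.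
case/(near0_exists eps_gt0) => r2 [r2_gt0 r2_lt /(near0_exists eps_gt0)].
by case=> r1 [r1_gt0 r1_lt invariant]; exists r1, r2.
Qed.
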